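(* Let $\lambda$ be an infinite cardinal with $\lambda=\lambda^{<\lambda}$. Then $(\mathfrak{b}^5_\lambda)'\le\mathfrak{b}^1_\lambda$.
   Context: For sets $A,B$, $A\subseteq^* B$ means $|A\setminus B|<\lambda$. For families $\mathcal{B},\mathcal{C}$ of subsets of $\lambda\times\lambda$, a set $S$ separates $\mathcal{B}$ and $\mathcal{C}$ if $B\subseteq^* S$ for every $B\in\mathcal{B}$ and $|C\cap S|<\lambda$ for every $C\in\mathcal{C}$; $\mathcal{B},\mathcal{C}$ are separable if some $S$ separates them. A family is almost disjoint if any two distinct members meet in fewer than $\lambda$ points. $(\mathfrak{b}^5_\lambda)'$ is the least cardinality of a family $\mathcal{B}\subseteq[\lambda\times\lambda]^\lambda$ for which there is $\mathcal{C}\subseteq[\lambda\times\lambda]^\lambda$ with $|\mathcal{C}|=\lambda$, $\mathcal{B}\cap\mathcal{C}=\emptyset$, $\mathcal{B}\cup\mathcal{C}$ almost disjoint, and such that for every $\mathcal{D}\in[\mathcal{C}]^\lambda$, $\mathcal{B}$ and $\mathcal{D}$ are not separable. For $f,g\in{}^\lambda\lambda$, $f<^* g$ means $|\{\alpha<\lambda: f(\alpha)\ge g(\alpha)\}|<\lambda$ and $f\le^*g$ means $|\{\alpha: f(\alpha)>g(\alpha)\}|<\lambda$; $B\subseteq{}^\lambda\lambda$ is unbounded if no $h$ satisfies $f\le^* h$ for all $f\in B$. $\mathfrak{b}^1_\lambda$ is the least cardinality of an unbounded $B\subseteq{}^\lambda\lambda$ all of whose members are strictly increasing and which is well ordered by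 $<^*$. *)

(* cardinals are modelled by types and injections. *)
From Stdlib Require Import Classical FunctionalExtensionality PropExtensionality.

Definition le_card (X Y : Type) : Prop := exists f : X -> Y, forall x y, f x = f y -> x = y.
Definition eq_card (X Y : Type) : Prop := le_card X Y /\ le_card Y X.
Definition lt_card (X Y : Type) : Prop := le_card X Y /\ ~ le_card Y X.

(* The cardinal lambda is represented by a type L with a strict well-order lt
   whose order type is an initial ordinal (every proper initial segment is
   of strictly smaller cardinality). *)
Definition is_cardinal_order (L : Type) (lt : L -> L -> Prop) : Prop :=
  well_founded lt /\
  (forall x y z, lt x y -> lt y z -> lt x z) /\
  (forall x y, lt x y \/ x = y \/ lt y x) /\
  (forall a : L, ~ le_card L {b : L | lt b a}).

Definition infinite_type (L : Type) : Prop := le_card nat L.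

(* lambda^{<lambda} = lambda:  | U_{alpha<lambda} lambda^alpha | = lambda *)
Definition lam_lt_lam (L : Type) (lt : L -> L -> Prop) : Prop :=
  eq_card {a : L & ({b : L | lt b a} -> L)} L.

Definition set2 (L : Type) := L * L -> Prop.
Definition fam (L : Type) := set2 L -> Prop.

Section Lam.
Context {L : Type} (lt : L -> L -> Prop).

Definition leL (x y : L) : Prop := lt x y \/ x = y.


Definition small (A : set2 L) : Prop := lt_card {p : L * L | A p} L.
Definition subset_star (A B : set2 L) : Prop := small (fun p => A p /\ ~ B p).
Definition big (A : set2 L) : Prop := eq_card {p : L * L | A p} L.

Definition separates (S : set2 L) (B C : fam L) : Prop :=
  (forall X, B X -> subset_star X S) /\
  (forall Y, C Y -> small (fun p => Y p /\ S p)).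
Definition separable (B C : fam L) : Prop := exists S, separates S B C.

Definition almost_disjoint (F : fam L) : Prop :=
  forall X Y, F X -> F Y -> X <> Y -> small (fun p => X p /\ Y p).

Definition b5'_witness (B : fam L) : Prop :=
  (forall X, B X -> big X) /\
  exists C : fam L,
    (forall Y, C Y -> big Y) /\
    eq_card {Y : set2 L | C Y} L /\
    (forall X, B X -> C X -> False) /\
    almost_disjoint (fun X => B X \/ C X) /\
    (forall D : fam L, (forall Y, D Y -> C Y) -> eq_card {Y : set2 L | D Y} L ->
        ~ separable B D).

Definition lt_star (f g : L -> L) : Prop :=
  lt_card {a : L | leL (g a) (f a)} L.
Definition le_star (f g : L -> L) : Prop :=
  lt_card {a : L | lt (g a) (f a)} L.
Definition unbounded (B : (L -> L) -> Prop) : Prop :=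
  ~ exists h : L -> L, forall f, B f -> le_star f h.
Definition strictly_increasing (f : L -> L) : Prop :=
  forall a b, lt a b -> lt (f a) (f b).
Definition well_ordered_by_lt_star (B : (L -> L) -> Prop) : Prop :=
  (forall f g, B f -> B g -> f <> g -> lt_star f g \/ lt_star g f) /\
  (forall f g, B f -> B g -> lt_star f g -> ~ lt_star g f) /\
  well_founded (fun f g : {h : L -> L | B h} => lt_star (proj1_sig f) (proj1_sig g)).

Definition b1_witness (B : (L -> L) -> Prop) : Prop :=
  (forall f, B f -> strictly_increasing f) /\
  well_ordered_by_lt_star B /\
  unbounded B.
End Lam.

From Stdlib Require Import Classical ClassicalEpsilon FunctionalExtensionality ProofIrrelevance Eqdep.

(* Take for B5 the graphs of the members of a b^1-witness B and for C the
   columns {a} x lambda.  Two graphs meet in fewer than lambda points because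
   B is linearly ordered by <*, and a graph meets a column in one point.  If S
   separated the graphs from lambda many columns, these columns would be
   cofinal in lambda and each would meet S in a bounded set (lambda is regular:
   a diagonal argument against lambda^{<lambda} = lambda).  Reading these
   bounds off along the cofinal columns yields an h with f <=* h for every
   strictly increasing f in B, contradicting unboundedness. *)

Lemma sig_ext {A} {P : A -> Prop} (x y : {a | P a}) : proj1_sig x = proj1_sig y -> x = y.
Proof.
  destruct x as [x Hx], y as [y Hy]; simpl; intros ->; f_equal; apply proof_irrelevance.
Qed.

Lemma le_card_trans X Y Z : le_card X Y -> le_card Y Z -> le_card X Z.
Proof. intros [f Hf] [g Hg]; exists (fun x => g (f x)); auto. Qed.

Lemma lt_card_le_lt X Y Z : le_card X Y -> lt_card Y Z -> lt_card X Z.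
Proof.
  intros HXY [HYZ HZY]; split; [eapply le_card_trans; eauto|].
  intro HZX; apply HZY; eapply le_card_trans; eauto.
Qed.

Lemma le_card_of_surj X Y (s : Y -> X) : (forall x, exists y, s y = x) -> le_card X Y.
Proof.
  intros Hs. destruct (choice _ Hs) as [g Hg].
  exists g. intros x y E. rewrite <- (Hg x), <- (Hg y), E. reflexivity.
Qed.

Lemma surj_of_le_card X Y (x0 : X) : le_card X Y -> exists r : Y -> X, forall x, exists y, r y = x.
Proof.
  intros [c Hc].
  assert (Hr : forall y, exists x, (exists x', c x' = y) -> c x = y).
  { intro y. destruct (classic (exists x', c x' = y)) as [[x' Hx']|Hn];
      [exists x'|exists x0]; tauto. }
  destruct (choice _ Hr) as [r Hr']. exists r. intro x. exists (c x). apply Hc, Hr'. eauto.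
Qed.

(* Cantor's diagonal argument, where coordinate [b] only has to escape the
   values of the [x] assigned to it by [P]. *)
Lemma diagonal_escapes X A Y (g : X -> A -> Y) (P : X -> A -> Prop) :
  (forall x, exists b, P x b) ->
  (forall b, exists y, forall x, P x b -> g x b <> y) ->
  exists d, forall x, g x <> d.
Proof.
  intros Hcov Hmiss. destruct (choice _ Hmiss) as [d Hd].
  exists d. intros x E. destruct (Hcov x) as [b Hb].
  apply (Hd b x Hb). rewrite E. reflexivity.
Qed.

Section InitialOrdinal.

Context {L : Type} (lt : L -> L -> Prop).
Hypothesis Hcard : is_cardinal_order L lt.
Hypothesis Hinf : infinite_type L.
Hypothesis Hlam : lam_lt_lam L lt.

Lemma lt_trans x y z : lt x y -> lt y z -> lt x z.
Proof. exact (proj1 (proj2 Hcard) x y z). Qed.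

Lemma lt_trichotomy x y : lt x y \/ x = y \/ lt y x.
Proof. exact (proj1 (proj2 (proj2 Hcard)) x y). Qed.

Lemma lt_irrefl x : ~ lt x x.
Proof.
  induction (proj1 Hcard x) as [x _ IH]. intro Hxx. exact (IH x Hxx Hxx).
Qed.

Lemma not_lt_leL x y : ~ lt x y -> leL lt y x.
Proof.
  intros Hxy. destruct (lt_trichotomy x y) as [H|[H|H]]; [contradiction|right|left]; auto.
Qed.

Lemma leL_lt_trans x y z : leL lt x y -> lt y z -> lt x z.
Proof. intros [H| ->] Hyz; [eapply lt_trans|]; eauto. Qed.

Lemma leL_trans x y z : leL lt x y -> leL lt y z -> leL lt x z.
Proof. intros Hxy [H| ->]; [left; eapply leL_lt_trans|]; eauto. Qed.

Lemma lt_leL_asym x y : lt x y -> leL lt y x -> False.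
Proof. intros Hxy Hyx. exact (lt_irrefl _ (leL_lt_trans _ _ _ Hyx Hxy)). Qed.

Lemma strictly_increasing_leL f a b :
  strictly_increasing lt f -> leL lt a b -> leL lt (f a) (f b).
Proof. intros Hf [H| ->]; [left; apply Hf|right]; auto. Qed.

Lemma strictly_increasing_injective f :
  strictly_increasing lt f -> forall a b, f a = f b -> a = b.
Proof.
  intros Hf a b E.
  destruct (lt_trichotomy a b) as [H|[H|H]]; auto; apply Hf in H; rewrite E in H;
    destruct (lt_irrefl _ H).
Qed.

Lemma two_distinct : exists x y : L, x <> y.
Proof.
  destruct Hinf as [n Hn]. exists (n 0), (n 1). intro E. discriminate (Hn _ _ E).
Qed.

Lemma avoid_two (p q : L) : exists x, x <> p /\ x <> q.
Proof.
  destruct Hinf as [n Hn]. apply NNPP; intro Hno.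
  assert (Hk : forall k, n k = p \/ n k = q).
  { intro k. apply NNPP; intro Hk. apply Hno. exists (n k). tauto. }
  destruct (Hk 0) as [E0|E0], (Hk 1) as [E1|E1], (Hk 2) as [E2|E2];
    first [ discriminate (Hn 0 1 ltac:(congruence))
          | discriminate (Hn 0 2 ltac:(congruence))
          | discriminate (Hn 1 2 ltac:(congruence)) ].
Qed.

Lemma subsingleton_small (T : Type) : (forall x y : T, x = y) -> lt_card T L.
Proof.
  intros Hs. destruct two_distinct as [x [y Hxy]]. split.
  - exists (fun _ => x). intros t t' _. apply Hs.
  - intros [j Hj]. apply Hxy, Hj, Hs.
Qed.

Lemma seg_functions_le_card a : le_card ({b | lt b a} -> L) L.
Proof.
  destruct Hlam as [[G HG] _]. exists (fun e => G (existT _ a e)).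
  intros e e' E. exact (inj_pair2 _ _ _ _ _ (HG _ _ E)).
Qed.

(* Regularity of lambda: no map from a proper initial segment is cofinal. *)
Lemma seg_function_bounded a (e : {b | lt b a} -> L) : exists u, forall b, leL lt (e b) u.
Proof.
  apply NNPP; intro Hunb.
  assert (Hcov : forall y, exists b, lt y (e b)).
  { intro y. apply NNPP; intro Hy. apply Hunb. exists y. intro b. apply not_lt_leL. eauto. }
  destruct (surj_of_le_card _ _ (fun _ => a) (seg_functions_le_card a)) as [r Hr].
  assert (Hmiss : forall b, exists z, forall y, lt y (e b) -> r y b <> z).
  { intro b. apply NNPP; intro Hfull. apply (proj2 (proj2 (proj2 Hcard)) (e b)).
    apply (le_card_of_surj _ _ (fun y : {y | lt y (e b)} => r (proj1_sig y) b)).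
    intro z. apply NNPP; intro Hz. apply Hfull. exists z. intros y Hy E.
    apply Hz. exists (exist _ y Hy). exact E. }
  destruct (diagonal_escapes _ _ _ r (fun y b => lt y (e b)) Hcov Hmiss) as [d Hd].
  destruct (Hr d) as [y Hy]. exact (Hd y Hy).
Qed.

Lemma closed_segment_small u : lt_card {y | leL lt y u} L.
Proof.
  split; [exists (@proj1_sig _ _); intros x y; apply sig_ext|]. intros Hj.
  destruct (classic (exists x0, lt x0 u)) as [[x0 Hx0]|Hno].
  - pose (top := exist (fun y => leL lt y u) u (or_intror eq_refl)).
    pose (emb := fun b : {b | lt b u} =>
                   exist (fun y => leL lt y u) (proj1_sig b) (or_introl (proj2_sig b))).
    destruct (surj_of_le_card _ _ (fun _ => u)
                (le_card_trans _ _ _ (seg_functions_le_card u) Hj)) as [r Hr].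
    assert (Hcov : forall y, exists b, y = emb b \/ y = top).
    { intros [y [Hy|Hy]];
        [exists (exist _ y Hy); left | exists (exist _ x0 Hx0); right]; apply sig_ext; auto. }
    (* each coordinate only has to avoid two values, which an infinite [L] allows *)
    assert (Hmiss : forall b, exists z, forall y, (y = emb b \/ y = top) -> r y b <> z).
    { intro b. destruct (avoid_two (r (emb b) b) (r top b)) as [z [H1 H2]].
      exists z. intros y [-> | ->]; auto. }
    destruct (diagonal_escapes _ _ _ r (fun y b => y = emb b \/ y = top) Hcov Hmiss)
      as [d Hd].
    destruct (Hr d) as [y Hy]. exact (Hd y Hy).
  - refine (proj2 (subsingleton_small _ _) Hj).
    assert (Hu : forall y : {y | leL lt y u}, proj1_sig y = u).
    { intros [y [Hy|Hy]]; [destruct (Hno (ex_intro _ y Hy))|exact Hy]. }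
    intros x y. apply sig_ext. rewrite !Hu. reflexivity.
Qed.

Lemma small_of_bounded (P : L -> Prop) u :
  (forall x, P x -> leL lt x u) -> lt_card {x | P x} L.
Proof.
  intros Hu. apply lt_card_le_lt with {y | leL lt y u}; [|apply closed_segment_small].
  exists (fun x => exist _ (proj1_sig x) (Hu _ (proj2_sig x))).
  intros x y E. apply sig_ext. exact (f_equal (@proj1_sig _ _) E).
Qed.

Lemma cofinal_increasing_enum (P : L -> Prop) :
  (forall u, exists x, P x /\ lt u x) ->
  exists phi : L -> L, (forall a, P (phi a)) /\ strictly_increasing lt phi.
Proof.
  intros Hcof. destruct (choice _ Hcof) as [next Hnext].
  destruct (choice (A := {a : L & {b | lt b a} -> L}) (B := L)
              (fun ae u => forall b, leL lt (projT2 ae b) u)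
              (fun ae => seg_function_bounded (projT1 ae) (projT2 ae))) as [ub Hub].
  pose (F := fun a (rec : forall b, lt b a -> L) =>
               next (ub (existT _ a (fun b => rec (proj1_sig b) (proj2_sig b))))).
  pose (phi := Fix (proj1 Hcard) (fun _ => L) F).
  assert (Hphi : forall a, phi a = F a (fun b _ => phi b)).
  { apply Fix_eq. intros a f g Hfg.
    replace g with f; [reflexivity|].
    apply functional_extensionality_dep; intro b.
    apply functional_extensionality_dep; intro p. apply Hfg. }
  exists phi. split.
  - intro a. rewrite Hphi. apply Hnext.
  - intros b a Hba. rewrite (Hphi a).
    pose (ae := existT (fun x => {b | lt b x} -> L) a (fun b' => phi (proj1_sig b'))).
    exact (leL_lt_trans _ _ _ (Hub ae (exist _ b Hba)) (proj2 (Hnext (ub ae)))).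
Qed.

Lemma bounded_of_small (P : L -> Prop) :
  lt_card {x | P x} L -> exists u, forall x, P x -> leL lt x u.
Proof.
  intros [_ Hsmall]. apply NNPP; intro Hunb.
  assert (Hcof : forall u, exists x, P x /\ lt u x).
  { intro u. apply NNPP; intro Hu. apply Hunb. exists u. intros x Px.
    apply not_lt_leL. eauto. }
  destruct (cofinal_increasing_enum P Hcof) as [phi [HP Hinc]].
  apply Hsmall. exists (fun a => exist P (phi a) (HP a)).
  intros a b E. exact (strictly_increasing_injective phi Hinc a b (f_equal (@proj1_sig _ _) E)).
Qed.

Definition graph (f : L -> L) : set2 L := fun p => snd p = f (fst p).
Definition column (a : L) : set2 L := fun p => fst p = a.
Definition graphs (B : (L -> L) -> Prop) : fam L := fun X => exists f, B f /\ X = graph f.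
Definition columns : fam L := fun Y => exists a, Y = column a.

Lemma graph_big f : big (graph f).
Proof.
  split.
  - exists (fun p => fst (proj1_sig p)).
    intros [[a b] Hp] [[a' b'] Hq] E. apply sig_ext. unfold graph in *; simpl in *. congruence.
  - exists (fun a => exist (graph f) (a, f a) eq_refl).
    intros a b E. exact (f_equal (fun p => fst (proj1_sig p)) E).
Qed.

Lemma column_big a : big (column a).
Proof.
  split.
  - exists (fun p => snd (proj1_sig p)).
    intros [[x b] Hp] [[x' b'] Hq] E. apply sig_ext. unfold column in *; simpl in *. congruence.
  - exists (fun b => exist (column a) (a, b) eq_refl).
    intros b b' E. exact (f_equal (fun p => snd (proj1_sig p)) E).
Qed.

Lemma columns_card : eq_card {Y | columns Y} L.
Proof.
  split.
  - destruct (choice (fun (Y : {Y | columns Y}) a => proj1_sig Y = column a)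
                (fun Y => proj2_sig Y)) as [idx Hidx].
    exists idx. intros X Y E. apply sig_ext. rewrite Hidx, (Hidx Y), E. reflexivity.
  - exists (fun a => exist columns (column a) (ex_intro _ a eq_refl)).
    intros a b E. apply (f_equal (@proj1_sig _ _)) in E; simpl in E.
    assert (Ha : column a (a, a)) by reflexivity. rewrite E in Ha. exact Ha.
Qed.

Lemma graph_neq_column f a : graph f <> column a.
Proof.
  intros E. destruct two_distinct as [x [y Hxy]].
  assert (Hx : graph f (a, x)) by (rewrite E; reflexivity).
  assert (Hy : graph f (a, y)) by (rewrite E; reflexivity).
  unfold graph in *; simpl in *. congruence.
Qed.

Lemma small_inter_comm (X Y : set2 L) :
  small (fun p => X p /\ Y p) -> small (fun p => Y p /\ X p).
Proof.
  apply lt_card_le_lt.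
  exists (fun p => exist _ (proj1_sig p) (conj (proj2 (proj2_sig p)) (proj1 (proj2_sig p)))).
  intros p q E. apply sig_ext. exact (f_equal (@proj1_sig _ _) E).
Qed.

Lemma small_graph_inter f g : lt_star lt f g -> small (fun p => graph f p /\ graph g p).
Proof.
  apply lt_card_le_lt.
  assert (Hagree : forall p, graph f p /\ graph g p -> leL lt (g (fst p)) (f (fst p))).
  { intros p [Hf Hg]. right. unfold graph in *. congruence. }
  exists (fun p => exist _ (fst (proj1_sig p)) (Hagree _ (proj2_sig p))).
  intros [[a b] [Hf Hg]] [[a' b'] [Hf' Hg']] E. apply sig_ext.
  apply (f_equal (@proj1_sig _ _)) in E. unfold graph in *; simpl in *. congruence.
Qed.

Lemma small_graph_column f a : small (fun p => graph f p /\ column a p).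
Proof.
  apply subsingleton_small. intros [[x b] [Hg Hc]] [[x' b'] [Hg' Hc']].
  apply sig_ext. unfold graph, column in *; simpl in *. congruence.
Qed.

Lemma small_column_column a b : a <> b -> small (fun p => column a p /\ column b p).
Proof.
  intros Hab. apply subsingleton_small. intros [[x y] [Ha Hb]].
  unfold column in *; simpl in *. congruence.
Qed.

Lemma graphs_columns_almost_disjoint (B : (L -> L) -> Prop) :
  (forall f g, B f -> B g -> f <> g -> lt_star lt f g \/ lt_star lt g f) ->
  almost_disjoint (fun X => graphs B X \/ columns X).
Proof.
  intros Hlin X Y HX HY Hne.
  destruct HX as [[f [Hf ->]]|[a ->]], HY as [[g [Hg ->]]|[b ->]].
  - destruct (Hlin f g Hf Hg) as [H|H]; [intros ->; auto| |].
    + exact (small_graph_inter f g H).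
    + exact (small_inter_comm _ _ (small_graph_inter g f H)).
  - apply small_graph_column.
  - apply small_inter_comm, small_graph_column.
  - apply small_column_column. intros ->; auto.
Qed.

Lemma large_columns_cofinal (D : fam L) :
  (forall Y, D Y -> columns Y) -> eq_card {Y | D Y} L ->
  forall a, exists i, D (column i) /\ leL lt a i.
Proof.
  intros HDC [_ HD] a. apply NNPP; intro Hno.
  apply (proj2 (proj2 (proj2 Hcard)) a). eapply le_card_trans; [exact HD|].
  assert (Hidx : forall Y : {Y | D Y}, exists b : {b | lt b a}, proj1_sig Y = column (proj1_sig b)).
  { intros [Y HY]. destruct (HDC Y HY) as [b ->].
    assert (Hb : lt b a).
    { apply NNPP; intro Hb. apply Hno. exists b. split; [exact HY|apply not_lt_leL, Hb]. }
    exists (exist _ b Hb). reflexivity. }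
  destruct (choice _ Hidx) as [idx Hi]. exists idx.
  intros X Y E. apply sig_ext. rewrite Hi, (Hi Y), E. reflexivity.
Qed.

(* [h a] bounds [S] on a column [i >= a]; once [a] is past the bounded set where
   the graph of [f] leaves [S], monotonicity gives [f a <= f i <= h a]. *)
Lemma separator_bounds_increasing (B : (L -> L) -> Prop) (I : L -> Prop) (S : set2 L) :
  (forall f, B f -> strictly_increasing lt f) ->
  (forall a, exists i, I i /\ leL lt a i) ->
  (forall i, I i -> small (fun p => column i p /\ S p)) ->
  (forall f, B f -> subset_star (graph f) S) ->
  exists h, forall f, B f -> le_star lt f h.
Proof.
  intros Hinc Hcof HcolS HgraphS.
  assert (Hrow : forall i, I i -> exists u, forall b, S (i, b) -> leL lt b u).
  { intros i Hi. apply bounded_of_small. eapply lt_card_le_lt; [|exact (HcolS i Hi)].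
    exists (fun b => exist (fun p => column i p /\ S p) (i, proj1_sig b)
                       (conj eq_refl (proj2_sig b))).
    intros x y E. apply sig_ext. exact (f_equal (fun p => snd (proj1_sig p)) E). }
  assert (Hh : forall a, exists u, exists i, leL lt a i /\ forall b, S (i, b) -> leL lt b u).
  { intro a. destruct (Hcof a) as [i [Hi Hai]]. destruct (Hrow i Hi) as [u Hu]. eauto. }
  destruct (choice _ Hh) as [h Hh']. exists h. intros f Hf.
  assert (Hleave : lt_card {a | ~ S (a, f a)} L).
  { eapply lt_card_le_lt; [|exact (HgraphS f Hf)].
    exists (fun a => exist (fun p => graph f p /\ ~ S p) (proj1_sig a, f (proj1_sig a))
                      (conj eq_refl (proj2_sig a))).
    intros x y E. apply sig_ext. exact (f_equal (fun p => fst (proj1_sig p)) E). }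
  destruct (bounded_of_small _ Hleave) as [e He].
  apply (small_of_bounded _ e). intros a Ha.
  destruct (Hh' a) as [i [Hai Hu]].
  destruct (classic (S (i, f i))) as [HS|HS].
  - destruct (lt_leL_asym _ _ Ha
                (leL_trans _ _ _ (strictly_increasing_leL f a i (Hinc f Hf) Hai) (Hu _ HS))).
  - exact (leL_trans _ _ _ Hai (He i HS)).
Qed.

Lemma graphs_columns_not_separable (B : (L -> L) -> Prop) (D : fam L) :
  (forall f, B f -> strictly_increasing lt f) -> unbounded lt B ->
  (forall Y, D Y -> columns Y) -> eq_card {Y | D Y} L ->
  ~ separable (graphs B) D.
Proof.
  intros Hinc Hunb HDC HD [S [HB HDS]]. apply Hunb.
  apply (separator_bounds_increasing B (fun i => D (column i)) S Hinc).
  - exact (large_columns_cofinal D HDC HD).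
  - intros i Hi. exact (HDS _ Hi).
  - intros f Hf. apply HB. exists f. auto.
Qed.

Lemma graphs_le_card (B : (L -> L) -> Prop) : le_card {X | graphs B X} {f | B f}.
Proof.
  destruct (choice (fun (X : {X | graphs B X}) (f : {f | B f}) => proj1_sig X = graph (proj1_sig f)))
    as [fn Hfn].
  { intros [X [f [Hf ->]]]. exists (exist _ f Hf). reflexivity. }
  exists fn. intros X Y E. apply sig_ext. rewrite Hfn, (Hfn Y), E. reflexivity.
Qed.

End InitialOrdinal.

Theorem mainTheorem9 (L : Type) (lt : L -> L -> Prop)
  (Hcard : is_cardinal_order L lt) (Hinf : infinite_type L)
  (Hlam : lam_lt_lam L lt) :
  forall B1 : (L -> L) -> Prop, b1_witness lt B1 ->
    exists B5 : fam L, b5'_witness B5 /\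
      le_card {X : set2 L | B5 X} {f : L -> L | B1 f}.
Proof.
  intros B1 [Hinc [[Hlin _] Hunb]].
  exists (graphs B1). split; [split|].
  - intros X [f [_ ->]]. apply graph_big.
  - exists columns. split; [|split; [|split; [|split]]].
    + intros Y [a ->]. apply column_big.
    + apply columns_card.
    + intros X [f [_ ->]] [a E]. exact (graph_neq_column Hinf f a E).
    + exact (graphs_columns_almost_disjoint lt Hinf B1 Hlin).
    + intros D HDC HD.
      exact (graphs_columns_not_separable lt Hcard Hinf Hlam B1 D Hinc Hunb HDC HD).
  - apply graphs_le_card.
Qed.
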